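(* Let $G=(V,E)$ be a finite, connected, bipartite cubic graph. For every $A\in\mathcal F(G)$, every $x\in V$, and every neighbour $x'$ of $x$, there exists a path $z_1z_2\cdots z_{2k}$ in $G$ (with distinct vertices, $k\ge1$) such that $z_1=x$, $z_{2k}=x'$, $z_iz_{i+1}\notin A$ for all odd $i$, and $z_iz_{i+1}\in A$ for all even $i$.
   Context: $\mathcal F(G)=\{A\subseteq E: d_w(A)=2\text{ for all }w\in V\}$, where $d_w(A)$ is the number of edges of $A$ incident to $w$ (the 2-factors of $G$). *)

From mathcomp Require Import all_boot.
Set Implicit Arguments. Unset Strict Implicit. Unset Printing Implicit Defensive.

Definition simple_graph (T : finType) (e : rel T) : Prop :=
  symmetric e /\ irreflexive e.

Definition edges (T : finType) (e : rel T) : {set {set T}} :=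
  [set [set p.1; p.2] | p in [pred p : T * T | e p.1 p.2]].

Definition deg_in (T : finType) (A : {set {set T}}) (w : T) : nat :=
  #|[set a in A | w \in a]|.

Definition two_factors (T : finType) (e : rel T) : {set {set {set T}}} :=
  [set A : {set {set T}} | (A \subset edges e) && [forall w, deg_in A w == 2]].

Definition cubic (T : finType) (e : rel T) : Prop :=
  forall x : T, #|[set y | e x y]| = 3.

Definition connected (T : finType) (e : rel T) : Prop :=
  forall x y : T, connect e x y.

Definition bipartite (T : finType) (e : rel T) : Prop :=
  exists c : T -> bool, forall x y, e x y -> c x != c y.

From mathcomp Require Import all_boot.
Set Implicit Arguments. Unset Strict Implicit. Unset Printing Implicit Defensive.

(* In a cubic graph the complement of a 2-factor A is a perfect matching; let
   m be its involution.  Put an arrow v -> w when w is an A-neighbour of m v, so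
   that a walk x -> w1 -> w2 -> ... unfolds into the alternating path
   x, m x, w1, m w1, w2, ...  Every vertex has in- and out-degree 2 in this
   digraph, so the set R of vertices reachable from x is also closed under
   predecessors; hence R together with m(R) is closed under adjacency and, by
   connectivity, contains x'.  Arrows preserve the colour of the bipartition
   while m swaps it, so x' is not in R and m x' is: a shortest walk from x to
   m x' unfolds into the required path, whose vertices are distinct because
   the walk is simple and every m w has the other colour. *)

Lemma card_arcs_from (T : finType) (D : rel T) n (R : {pred T}) :
  (forall v, #|[set w | D v w]| = n) ->
  #|[set p : T * T | (p.1 \in R) && D p.1 p.2]| = #|R| * n.
Proof.
move=> outdeg; rewrite -sum1dep_card.
have -> : \sum_(p | (p.1 \in R) && D p.1 p.2) 1 = \sum_(v in R) \sum_(w | D v w) 1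
  by rewrite pair_big_dep.
by rewrite -sum_nat_const; apply: eq_bigr => v _; rewrite sum1dep_card outdeg.
Qed.

(* Double counting: as many arcs leave R as enter R, so none enters from outside. *)
Lemma regular_succ_closed_pred_closed (T : finType) (D : rel T) n (R : {pred T}) :
  (forall v, #|[set w | D v w]| = n) ->
  (forall w, #|[set v | D v w]| = n) ->
  (forall v w, v \in R -> D v w -> w \in R) ->
  forall v w, w \in R -> D v w -> v \in R.
Proof.
move=> outdeg indeg succR v w wR Dvw.
pose swap (p : T * T) := (p.2, p.1).
have swapK : involutive swap by case.
set from_R := [set p : T * T | (p.1 \in R) && D p.1 p.2].
set into_R := swap @^-1: [set p : T * T | (p.1 \in R) && D p.2 p.1].
have card_from : #|from_R| = #|R| * n := card_arcs_from R outdeg.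
have card_into : #|into_R| = #|R| * n.
  rewrite card_preimset; last exact: inv_inj.
  exact: (@card_arcs_from _ (fun a b => D b a)).
have from_sub_into : from_R \subset into_R.
  by apply/subsetP => -[a b]; rewrite !inE /= => /andP[aR Dab]; rewrite Dab (succR a b).
have from_into : from_R = into_R.
  by apply/eqP; rewrite eqEcard from_sub_into card_from card_into leqnn.
have : (v, w) \in into_R by rewrite !inE /= wR Dvw.
by rewrite -from_into inE /= => /andP[].
Qed.

Fixpoint interleave (T : Type) (f : T -> T) (s : seq T) : seq T :=
  if s is v :: t then v :: f v :: interleave f t else [::].

Section Interleave.

Variables (T : Type) (f : T -> T).

Lemma size_interleave s : size (interleave f s) = (size s).*2.
Proof. by elim: s => //= v t ->; rewrite doubleS. Qed.

Lemma nth_interleave_even s x0 j : nth x0 (interleave f s) j.*2 = nth x0 s j.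
Proof. by elim: s j => [|v t IH] [|j] //=; rewrite doubleS /= IH. Qed.

Lemma nth_interleave_odd s x0 j : j < size s ->
  nth x0 (interleave f s) j.*2.+1 = f (nth x0 s j).
Proof. by elim: s j => [|v t IH] [|j] //= lt_j; rewrite ?doubleS /= ?IH. Qed.

End Interleave.

Lemma perm_interleave (T : eqType) (f : T -> T) s :
  perm_eq (interleave f s) (s ++ map f s).
Proof.
elim: s => //= v t IH; rewrite perm_cons -[f v :: map f t]cat1s.
by rewrite perm_sym perm_catCA /= perm_cons perm_sym.
Qed.

Lemma uniq_interleave (T : eqType) (f : T -> T) s : injective f -> uniq s ->
  {in s &, forall u v, f u != v} -> uniq (interleave f s).
Proof.
move=> f_inj s_uniq f_out.
rewrite (perm_uniq (perm_interleave f s)) cat_uniq map_inj_uniq // s_uniq andbT.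
by apply/hasPn => _ /mapP[u us ->]; apply/negP => /(f_out u _ us) /eqP.
Qed.

Section TwoFactor.

Variables (T : finType) (e : rel T) (A : {set {set T}}).
Hypotheses (e_sym : symmetric e) (e_irr : irreflexive e).
Hypothesis A_factor : A \in two_factors e.

Definition factor_nbrs v := [set y | e v y && ([set v; y] \in A)].

Lemma card_factor_nbrs v : #|factor_nbrs v| = 2.
Proof.
move: A_factor; rewrite inE => /andP[A_edges /forallP deg2].
rewrite -(eqP (deg2 v)) /deg_in -(@card_in_imset _ _ (fun y => [set v; y])).
  apply: eq_card => a; rewrite [in RHS]inE; apply/imsetP/andP.
    by case=> y; rewrite inE => /andP[_ yA] ->; rewrite !inE eqxx.
  case=> aA va; case/imsetP: (subsetP A_edges a aA) => -[p1 p2].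
  rewrite inE /= => ep a_def; move: aA va; rewrite a_def !inE => aA /orP[] /eqP ->.
    by exists p2; rewrite // inE ep aA.
  by exists p1; [rewrite inE e_sym ep setUC aA | exact: setUC].
move=> y1 y2; rewrite !inE => /andP[e1 _] _ eq_edge.
have : y1 \in [set v; y2] by rewrite -eq_edge !inE eqxx orbT.
by rewrite !inE => /orP[/eqP y1v | /eqP //]; rewrite y1v e_irr in e1.
Qed.

Hypothesis e_cubic : cubic e.

(* The default value [v] of [mate v] is never used: the pick always succeeds. *)
Definition mate v := odflt v [pick y in [set y | e v y] :\: factor_nbrs v].

Lemma mateP v y : (e v y && ([set v; y] \notin A)) = (y == mate v).
Proof.
have : #|[set y | e v y] :\: factor_nbrs v| == 1.
  rewrite cardsD (setIidPr _) ?e_cubic ?card_factor_nbrs //.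
  by apply/subsetP => z; rewrite !inE => /andP[].
case/cards1P => z non_factor.
have -> : mate v = z.
  rewrite /mate; case: pickP => [u|]; first by rewrite non_factor inE => /eqP.
  by move=> /(_ z); rewrite non_factor inE eqxx.
have := congr1 (fun S : {set T} => y \in S) non_factor; rewrite /= !inE => <-.
by case: (e v y); case: ([set v; y] \in A).
Qed.

Lemma mate_edge v : e v (mate v).
Proof. by have := mateP v (mate v); rewrite eqxx => /andP[]. Qed.

Lemma mate_notin_factor v : [set v; mate v] \notin A.
Proof. by have := mateP v (mate v); rewrite eqxx => /andP[]. Qed.

Lemma mateK : involutive mate.
Proof.
move=> v; apply/esym/eqP; rewrite -mateP e_sym mate_edge /=.
by rewrite setUC mate_notin_factor.
Qed.

Lemma mate_inj : injective mate.
Proof. exact: inv_inj mateK. Qed.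

Definition alt_step : rel T := fun v w => w \in factor_nbrs (mate v).

Lemma card_alt_succ v : #|[set w | alt_step v w]| = 2.
Proof. by rewrite -(card_factor_nbrs (mate v)); apply: eq_card => w; rewrite inE. Qed.

Lemma card_alt_pred w : #|[set v | alt_step v w]| = 2.
Proof.
rewrite -(card_factor_nbrs w) -(card_preimset _ mate_inj).
by apply: eq_card => v; rewrite !inE /alt_step mateK inE e_sym setUC.
Qed.

Lemma alt_step_pred_closed x v w :
  connect alt_step x w -> alt_step v w -> connect alt_step x v.
Proof.
apply: (regular_succ_closed_pred_closed card_alt_succ card_alt_pred) => u y xu uy.
exact: connect_trans xu (connect1 uy).
Qed.

Lemma connect_alt_step_or_mate x y : connect e x y ->
  connect alt_step x y || connect alt_step x (mate y).
Proof.
move=> xy; pose reach u := connect alt_step x u || connect alt_step x (mate u).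
have reach_edge u z : e u z -> reach u -> reach z.
  move=> euz; have [zA | zNA] := boolP ([set u; z] \in A).
    have step_uz : alt_step (mate u) z by rewrite /alt_step mateK inE euz zA.
    have step_zu : alt_step (mate z) u by rewrite /alt_step mateK inE e_sym euz setUC zA.
    case/orP=> [xu | xmu]; last by rewrite /reach (connect_trans xmu (connect1 step_uz)).
    by rewrite /reach (alt_step_pred_closed xu step_zu) orbT.
  have -> : z = mate u by apply/eqP; rewrite -mateP euz zNA.
  by rewrite /reach mateK orbC.
have reach_closed : closed e reach.
  by move=> u z euz; apply/idP/idP; apply: reach_edge; rewrite // e_sym.
by have := closed_connect reach_closed xy; rewrite -!topredE /= /reach connect0 => <-.
Qed.

Lemma alternating_interleave x q : path alt_step x q ->
  let s := interleave mate (x :: q) in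
  forall i, i.+1 < size s ->
    e (nth x s i) (nth x s i.+1) /\ ([set nth x s i; nth x s i.+1] \in A) = odd i.
Proof.
move=> q_path s i; rewrite /s size_interleave -(odd_double_half i) oddD odd_double.
set j := i./2; case: (odd i); rewrite ?add1n ?add0n => lt_i.
  rewrite -doubleS ltn_double in lt_i.
  rewrite nth_interleave_odd; last exact: ltnW.
  rewrite -doubleS nth_interleave_even /=.
  by have := pathP x q_path _ lt_i; rewrite /alt_step inE => /andP[-> ->].
have lt_j : j < size (x :: q) by rewrite -ltn_double ltnW.
rewrite nth_interleave_even nth_interleave_odd // mate_edge.
by rewrite (negbTE (mate_notin_factor _)).
Qed.

Variables (c : T -> bool).
Hypothesis c_proper : forall x y, e x y -> c x != c y.

Lemma colour_mate v : c (mate v) = ~~ c v.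
Proof. by have := c_proper (mate_edge v); case: (c v); case: (c (mate v)). Qed.

Lemma connect_alt_step_colour x y : connect alt_step x y -> c y = c x.
Proof.
have colour_closed : closed alt_step c.
  move=> v w; rewrite /alt_step inE => /andP[e_mw _].
  by have := c_proper e_mw; rewrite -!topredE colour_mate /=; case: (c v); case: (c w).
by move/(closed_connect colour_closed); rewrite -!topredE /= => ->.
Qed.

Lemma uniq_interleave_alt_path x q :
  path alt_step x q -> uniq (x :: q) -> uniq (interleave mate (x :: q)).
Proof.
move=> q_path q_uniq; apply: uniq_interleave q_uniq _ => [|u v uq vq].
  exact: mate_inj.
apply/eqP => /(congr1 c); rewrite colour_mate.
by rewrite !(connect_alt_step_colour (path_connect q_path _)) //; case: (c x).
Qed.

Hypothesis e_conn : connected e.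

Lemma alt_walk_to_mate x x' : e x x' ->
  exists q, [/\ path alt_step x q, uniq (x :: q) & last x q = mate x'].
Proof.
move=> exx'; have x'_unreached : ~~ connect alt_step x x'.
  by apply/negP => /connect_alt_step_colour x'x; have := c_proper exx'; rewrite x'x eqxx.
have := connect_alt_step_or_mate (e_conn x x'); rewrite (negbTE x'_unreached) /=.
case/connectP => p p_path p_last; case/shortenP: p_path p_last => q q_path q_uniq _.
by exists q.
Qed.

End TwoFactor.

Theorem lemma3 (T : finType) (e : rel T) :
  simple_graph e -> connected e -> bipartite e -> cubic e ->
  forall A : {set {set T}}, A \in two_factors e ->
  forall x x' : T, e x x' ->
  exists k : nat, 0 < k /\
  exists s : seq T,
    [/\ size s = k.*2, uniq s, nth x s 0 = x, nth x s (k.*2).-1 = x' &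
      forall i, i.+1 < size s ->
        e (nth x s i) (nth x s i.+1) /\
        ([set nth x s i; nth x s i.+1] \in A) = odd i].
Proof.
move=> [e_sym e_irr] e_conn [c c_proper] e_cubic A A_factor x x' exx'.
have [q [q_path q_uniq q_last]] :=
  alt_walk_to_mate e_sym e_irr A_factor e_cubic c_proper e_conn exx'.
exists (size (x :: q)); split=> //; exists (interleave (mate e A) (x :: q)); split.
- by rewrite size_interleave.
- exact: (uniq_interleave_alt_path e_sym e_irr A_factor e_cubic c_proper q_path).
- by [].
- rewrite (_ : (size (x :: q)).*2.-1 = (size q).*2.+1) // nth_interleave_odd //.
  by rewrite -last_nth q_last (mateK e_sym e_irr A_factor e_cubic).
- exact: alternating_interleave.
Qed.
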